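(* Let $n\ge 1$, $m=2$. There is a learning algorithm that exactly identifies every (complete or incomplete) acyclic $1$-bounded (tree) CP-net $N^*$ over $n$ binary variables using at most $4n+2e_{N^*}\log_2(n)$ membership queries over swap examples in $\overline{\mathcal{X}}_{swap}$, where $e_{N^*}$ is the number of edges of $N^*$.
   Context: Variables $V=\{v_1,\dots,v_n\}$, each with a domain of size $2$. An outcome assigns a value to every variable; $\mathcal{O}_X$ denotes assignments to $X\subseteq V$. A CP-net specifies for each $v_i$ a parent set $Pa(v_i)\subseteq V\setminus\{v_i\}$ and, for each context $\gamma\in\mathcal{O}_{Pa(v_i)}$, either a strict order $\succ^{v_i}_\gamma$ on $D_{v_i}$ or nothing (complete if an order is always given, otherwise incomplete); parents are non-dummy. The graph has edges $(v_j,v_i)$ for $v_j\in Pa(v_i)$; tree CP-net: acyclic and each variable has at most one parent. Improving flip: changing only $v_i$ to a value preferred under $\succ^{v_i}_{o[Pa(v_i)]}$ (when given); $o'\succ o$ iff a nonempty sequence of improving flips leads from $o$ to $o'$. $\overline{\mathcal{X}}_{swap}$ is the set of all ordered pairs $x=(x.1,x.2)$ of outcomes differing in exactly one variable. A membership query for $x\in\overline{\mathcal{X}}_{swap}$ returns $1$ iff $x.1\succ x.2$ under the unknown target $N^*$, else $0$ (answers always correct). Exact identification means outputting a CP-net inducing the same concept over $\overline{\mathcal{X}}_{swap}$ as $N^*$. *)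

From mathcomp Require Import all_boot.
From Stdlib Require Import Reals Relations.
Set Implicit Arguments. Unset Strict Implicit. Unset Printing Implicit Defensive.

(* Variables v_1..v_n are indexed by 'I_n; each domain is {false,true}. *)
Definition outcome (n : nat) := {ffun 'I_n -> bool}.

(* A (general) CP-net over n binary variables.
   pa i   : parent set of variable i.
   cpt i o: the preference on D_{v_i} in context o[Pa(v_i)] :
            Some b  = the strict order  b > ~~b  is given,
            None    = no order given (incomplete CP-net).
   cpt i is required to depend only on the parents' values. *)
Record cpnet (n : nat) := CPNet {
  pa : 'I_n -> {set 'I_n};
  cpt : 'I_n -> outcome n -> option bool;
  pa_irrefl : forall i, i \notin pa i;
  cpt_local : forall i (o o' : outcome n),
      (forall j, j \in pa i -> o j = o' j) -> cpt i o = cpt i o';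
  pa_nondummy : forall i j, j \in pa i ->
      exists o o' : outcome n,
        (forall k, k != j -> o k = o' k) /\ cpt i o <> cpt i o'
}.

Definition cp_edge n (N : cpnet n) : rel 'I_n := fun a b => a \in pa N b.

Definition acyclic n (N : cpnet n) : Prop :=
  forall i j, cp_edge N j i -> ~~ connect (cp_edge N) i j.

Definition tree_cpnet n (N : cpnet n) : Prop :=
  acyclic N /\ forall i, #|pa N i| <= 1.

Definition nedges n (N : cpnet n) : nat := \sum_(i < n) #|pa N i|.

Definition improving_flip n (N : cpnet n) (o o' : outcome n) : Prop :=
  exists i : 'I_n, (forall k, k != i -> o' k = o k) /\ o' i != o i /\
                   cpt N i o = Some (o' i).

Definition prefers n (N : cpnet n) (o' o : outcome n) : Prop :=
  clos_trans _ (improving_flip N) o o'.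

Definition is_swap n (x : outcome n * outcome n) : bool :=
  #|[set i | x.1 i != x.2 i]| == 1.

Definition swap_ex n := {x : outcome n * outcome n | is_swap x}.

(* Concept of N over swap examples: x |-> [x.1 > x.2]. *)
Definition same_concept n (N1 N2 : cpnet n) : Prop :=
  forall x : swap_ex n, prefers N1 (val x).1 (val x).2 <-> prefers N2 (val x).1 (val x).2.

(* A deterministic, adaptive learning algorithm asking membership queries on
   swap examples, modelled as a (finite) decision tree: at an inner node it
   asks a query and branches on the 0/1 answer; at a leaf it outputs a CP-net. *)
Inductive learner (n : nat) :=
  | Output : cpnet n -> learner n
  | Ask : swap_ex n -> (bool -> learner n) -> learner n.

Fixpoint run n (L : learner n) (ans : swap_ex n -> bool) : cpnet n * nat :=
  match L with
  | Output N => (N, 0)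
  | Ask x k => let r := run (k (ans x)) ans in (r.1, r.2.+1)
  end.

Definition mq_oracle n (N : cpnet n) (ans : swap_ex n -> bool) : Prop :=
  forall x : swap_ex n, ans x = true <-> prefers N (val x).1 (val x).2.

Definition log2 (x : R) : R := (ln x / ln 2)%R.

From mathcomp Require Import all_boot.
From Stdlib Require Import Reals Relations Lra.
Set Implicit Arguments. Unset Strict Implicit. Unset Printing Implicit Defensive.

(* In an acyclic CP-net the swap (o[i:=c], o[i:=~~c]) is improving iff the CPT
   of v_i prefers c in the context o: along an improving flip sequence, a
   flipped variable none of whose parents is flipped ends up changed, so it
   must be v_i, whose context never changes.  Hence two swap queries read one
   CPT entry.  In a tree CP-net the CPT of v_i is determined by its entries at
   the all-false and all-true outcomes (4 queries); these differ iff v_i has a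
   parent v_j, and then floor(log2 n) + 1 queries, one per bit of j, identify
   j.  In total 4n + e (floor(log2 n) + 1) <= 4n + 2 e log2 n queries, since an
   edge forces n >= 2. *)

Definition flip_at n (N : cpnet n) (v : 'I_n) (o o' : outcome n) : Prop :=
  (forall k, k != v -> o' k = o k) /\ o' v != o v /\ cpt N v o = Some (o' v).

Fixpoint flip_path n (N : cpnet n) (o : outcome n) (vs : seq 'I_n) (o' : outcome n) : Prop :=
  if vs is v :: vs' then exists2 o1, flip_at N v o o1 & flip_path N o1 vs' o' else o = o'.

Lemma prefers_flip_path n (N : cpnet n) o o' :
  prefers N o' o -> exists v vs, flip_path N o (v :: vs) o'.
Proof.
move=> /(clos_trans_t1n _ _ _ _) path.
elim: path => [x y [v flip_v] | x y z [v flip_v] _ [w [ws path]]].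
  by exists v, [::]; exists y.
by exists v, (w :: ws); exists y.
Qed.

Lemma flip_path_notin n (N : cpnet n) o o' vs k :
  flip_path N o vs o' -> k \notin vs -> o' k = o k.
Proof.
elim: vs o => [|v vs IH] o /=; first by move->.
case=> o1 [fix_o1 _] path1; rewrite inE negb_or => /andP[kv kvs].
by rewrite (IH _ path1 kvs) fix_o1.
Qed.

(* A variable none of whose parents flips along the path sees a constant
   context, so all its flips go the same way and it ends up changed. *)
Lemma flip_path_source n (N : cpnet n) o o' vs v :
  flip_path N o vs o' -> {in pa N v, forall j, j \notin vs} -> v \in vs ->
  cpt N v o = Some (o' v) /\ o' v != o v.
Proof.
elim: vs o => [|u vs IH] //= o [o1 [fix_o1 [flip_u cpt_u]] path1] no_pa.
have cpt_v : cpt N v o1 = cpt N v o.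
  apply: cpt_local => j /[dup] j_pa /no_pa; rewrite inE negb_or => /andP[ju _].
  exact: fix_o1.
have no_pa1 : {in pa N v, forall j, j \notin vs}.
  by move=> j /no_pa; rewrite inE negb_or => /andP[].
have [v_vs _ | v_vs] := boolP (v \in vs).
  have [cpt1 flip1] := IH _ path1 no_pa1 v_vs.
  have vu : v != u.
    by apply: contraNneq flip1 => vu; subst u; move: cpt1; rewrite cpt_v cpt_u => -[->].
  by rewrite -cpt_v cpt1 -(fix_o1 _ vu).
rewrite inE (negbTE v_vs) orbF => /eqP vu; subst u.
by rewrite (flip_path_notin path1 v_vs).
Qed.

Definition ancestors n (N : cpnet n) (v : 'I_n) : {set 'I_n} :=
  [set w | connect (cp_edge N) w v].

Lemma ancestors_parent_lt n (N : cpnet n) v j :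
  acyclic N -> j \in pa N v -> #|ancestors N j| < #|ancestors N v|.
Proof.
move=> acyc j_pa; apply/proper_card/properP; split.
  apply/subsetP => w; rewrite !inE => wj.
  by apply: connect_trans wj (connect1 _).
by exists v; rewrite !inE ?connect0 //; exact: acyc.
Qed.

Lemma exists_source n (N : cpnet n) (vs : seq 'I_n) v :
  acyclic N -> v \in vs -> exists2 u, u \in vs & {in pa N u, forall j, j \notin vs}.
Proof.
move=> acyc v_vs.
case: (arg_minnP (fun u => #|ancestors N u|) v_vs) => u u_vs u_min.
exists u => // j j_pa; apply/negP => /u_min.
by rewrite leqNgt (ancestors_parent_lt acyc j_pa).
Qed.

Definition set_var n (o : outcome n) (i : 'I_n) (c : bool) : outcome n :=
  [ffun v => if v == i then c else o v].

Lemma cpt_set_var n (N : cpnet n) o i c : cpt N i (set_var o i c) = cpt N i o.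
Proof.
apply: cpt_local => j j_pa; rewrite ffunE; case: eqP => // ji; subst j.
by move: (pa_irrefl N i); rewrite j_pa.
Qed.

Lemma prefers_swap n (N : cpnet n) o i c : acyclic N ->
  prefers N (set_var o i c) (set_var o i (~~ c)) <-> cpt N i o = Some c.
Proof.
move=> acyc; split => [|cpt_i].
  case/prefers_flip_path => v [vs path].
  have [u u_vs u_src] := exists_source acyc (mem_head v vs).
  have [cpt_u flip_u] := flip_path_source path u_src u_vs.
  have ui : u = i by apply/eqP; apply: contraNT flip_u => /negbTE ui; rewrite !ffunE ui.
  by move: cpt_u; rewrite ui cpt_set_var ffunE eqxx.
apply: t_step; exists i; rewrite cpt_set_var !ffunE eqxx; split; last split.
- by move=> k /negbTE ki; rewrite !ffunE ki.
- by case: c {cpt_i}.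
- exact: cpt_i.
Qed.

Lemma prefers_eq_cpt n (N1 N2 : cpnet n) :
  (forall i, cpt N1 i =1 cpt N2 i) -> forall o' o, prefers N1 o' o -> prefers N2 o' o.
Proof.
move=> eq_cpt o' o; elim=> [x y [i flip_i] | x y z _ xy _ yz].
  by apply: t_step; exists i; rewrite -eq_cpt.
exact: t_trans xy yz.
Qed.

Inductive qprog n (A : Type) :=
  | Ret of A
  | Query of swap_ex n & (bool -> qprog n A).
Arguments Ret {n A}.

Fixpoint qbind n A B (p : qprog n A) (f : A -> qprog n B) : qprog n B :=
  match p with
  | Ret a => f a
  | Query x k => Query x (fun b => qbind (k b) f)
  end.

Local Notation "x <- p ;; q" := (qbind p (fun x => q))
  (at level 61, p at next level, right associativity).

Fixpoint qval n A (p : qprog n A) (ans : swap_ex n -> bool) : A :=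
  match p with
  | Ret a => a
  | Query x k => qval (k (ans x)) ans
  end.

Fixpoint qcost n A (p : qprog n A) (ans : swap_ex n -> bool) : nat :=
  match p with
  | Ret _ => 0
  | Query x k => (qcost (k (ans x)) ans).+1
  end.

Fixpoint learner_of n (p : qprog n (cpnet n)) : learner n :=
  match p with
  | Ret N => Output N
  | Query x k => Ask x (fun b => learner_of (k b))
  end.

Lemma run_learner_of n (p : qprog n (cpnet n)) ans :
  run (learner_of p) ans = (qval p ans, qcost p ans).
Proof. by elim: p => //= x k IH; rewrite IH. Qed.

Lemma qval_bind n A B (p : qprog n A) (f : A -> qprog n B) ans :
  qval (qbind p f) ans = qval (f (qval p ans)) ans.
Proof. by elim: p => //= x k IH; rewrite IH. Qed.

Lemma qcost_bind n A B (p : qprog n A) (f : A -> qprog n B) ans :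
  qcost (qbind p f) ans = qcost p ans + qcost (f (qval p ans)) ans.
Proof. by elim: p => //= x k IH; rewrite IH. Qed.

Fixpoint qmap n X A (f : X -> qprog n A) (xs : seq X) : qprog n (seq A) :=
  if xs is x :: xs' then (a <- f x ;; r <- qmap f xs' ;; Ret (a :: r)) else Ret [::].

Lemma qval_map n X A (f : X -> qprog n A) xs ans :
  qval (qmap f xs) ans = [seq qval (f x) ans | x <- xs].
Proof. by elim: xs => //= x xs IH; rewrite !qval_bind IH. Qed.

Lemma qcost_map n X A (f : X -> qprog n A) xs ans :
  qcost (qmap f xs) ans = \sum_(x <- xs) qcost (f x) ans.
Proof.
elim: xs => [|x xs IH] /=; first by rewrite big_nil.
by rewrite big_cons !qcost_bind IH /= addn0.
Qed.

Definition query n (x : swap_ex n) : qprog n bool := Query x Ret.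

Lemma set_var_swap n (o : outcome n) i c : is_swap (set_var o i c, set_var o i (~~ c)).
Proof.
apply/eqP; rewrite (_ : [set _ | _] = [set i]) ?cards1 //; apply/setP => v.
by rewrite !inE !ffunE /=; case: (v == i); rewrite ?eqxx //; case: c.
Qed.

Definition swap_query n (o : outcome n) i c : swap_ex n :=
  exist (@is_swap n) _ (set_var_swap o i c).

Lemma oracle_swap_query n (N : cpnet n) ans o i c : acyclic N -> mq_oracle N ans ->
  ans (swap_query o i c) = (cpt N i o == Some c).
Proof.
move=> acyc oracle; apply/idP/eqP.
  by move/(oracle (swap_query o i c))/(prefers_swap _ _ _ acyc).
by move/(prefers_swap _ _ _ acyc)/(oracle (swap_query o i c)).
Qed.

Definition query_cpt n (o : outcome n) (i : 'I_n) : qprog n (option bool) :=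
  up <- query (swap_query o i true) ;;
  down <- query (swap_query o i false) ;;
  Ret (if up then Some true else if down then Some false else None).

Lemma qval_query_cpt n (N : cpnet n) ans o i : acyclic N -> mq_oracle N ans ->
  qval (query_cpt o i) ans = cpt N i o.
Proof.
move=> acyc oracle; rewrite /= !(oracle_swap_query _ _ _ acyc oracle).
by case: cpt => [[]|].
Qed.

Lemma qcost_query_cpt n (o : outcome n) i ans : qcost (query_cpt o i) ans = 2.
Proof. by []. Qed.

Definition from_bits (bs : seq bool) : nat := foldr (fun (a : bool) m => a + m.*2) 0 bs.

Lemma from_bitsK k j : j < expn 2 k -> from_bits [seq odd (j %/ expn 2 b) | b <- iota 0 k] = j.
Proof.
elim: k j => [|k IH] j lt_j /=; first by move: lt_j; rewrite expn0 ltnS leqn0 => /eqP->.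
have -> : [seq odd (j %/ expn 2 b) | b <- iota 1 k] = [seq odd (j./2 %/ expn 2 b) | b <- iota 0 k].
  by rewrite (iotaDl 1 0) -map_comp; apply: eq_map => b /=; rewrite expnS divnMA divn2.
by rewrite IH ?divn1 ?odd_double_half // -divn2 ltn_divLR // -expnSr.
Qed.

Definition nbits n := (trunc_log 2 n).+1.

Lemma ltn_exp2_nbits n : n < expn 2 (nbits n).
Proof. exact: trunc_log_ltn. Qed.

Definition const_outcome n (b : bool) : outcome n := [ffun=> b].

Definition bit_outcome n (b : nat) : outcome n := [ffun v : 'I_n => odd (v %/ expn 2 b)].

Definition separating (c0 c1 : option bool) : bool := (c0 == Some true) || (c1 == Some true).

Lemma separatingP c0 c1 : c0 != c1 ->
  (c0 == Some (separating c0 c1)) != (c1 == Some (separating c0 c1)).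
Proof. by case: c0 c1 => [[]|] [[]|]. Qed.

(* The [b]-th query sets every variable to bit [b] of its own index, so when the
   preference of [i] depends on [j] alone the answers spell out [j] in binary;
   one query per bit suffices because exactly one of [c0], [c1] is [Some t]. *)
Definition find_parent n (i : 'I_n) (c0 c1 : option bool) : qprog n 'I_n :=
  let t := separating c0 c1 in
  bs <- qmap (fun b => query (swap_query (bit_outcome n b) i t)) (iota 0 (nbits n)) ;;
  Ret (insubd i (from_bits [seq a == (c1 == Some t) | a <- bs])).

Lemma find_parent_correct n (N : cpnet n) ans (i j : 'I_n) c0 c1 :
  acyclic N -> mq_oracle N ans -> c0 != c1 ->
  (forall o, cpt N i o = if o j then c1 else c0) ->
  qval (find_parent i c0 c1) ans = j /\ qcost (find_parent i c0 c1) ans = nbits n.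
Proof.
move=> acyc oracle c01 cpt_i; rewrite qval_bind qcost_bind qval_map qcost_map.
split; last by rewrite (eq_bigr (fun=> 1)) // sum1_size size_iota addn0.
set t := separating c0 c1.
have bit_answer b :
    (ans (swap_query (bit_outcome n b) i t) == (c1 == Some t)) = odd (j %/ expn 2 b).
  rewrite (oracle_swap_query _ _ _ acyc oracle) cpt_i ffunE.
  by case: odd; [rewrite eqxx | apply/negbTE; exact: separatingP].
apply: val_inj; rewrite -map_comp (eq_map bit_answer) from_bitsK.
  exact: (insubdK i (ltn_ord j)).
exact: leq_trans (ltn_ord j) (ltnW (ltn_exp2_nbits n)).
Qed.

(* The guard [has_parent] makes [tree_net] a CP-net for arbitrary tables,
   whatever answers the learner receives. *)
Record table n := Table { pref0 : option bool; pref1 : option bool; parent : 'I_n }.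

Definition has_parent n (i : 'I_n) (d : table n) : bool :=
  (pref0 d != pref1 d) && (parent d != i).

Definition table_cpt n (i : 'I_n) (d : table n) (o : outcome n) : option bool :=
  if has_parent i d && o (parent d) then pref1 d else pref0 d.

Section TreeNet.

Variables (n : nat) (T : 'I_n -> table n).

Definition tree_pa (i : 'I_n) : {set 'I_n} :=
  if has_parent i (T i) then [set parent (T i)] else set0.

Lemma tree_pa_irrefl i : i \notin tree_pa i.
Proof.
by rewrite /tree_pa; case: ifP => [/andP[_ parent_i] | _]; rewrite inE // eq_sym.
Qed.

Lemma tree_cpt_local i (o o' : outcome n) :
  (forall j, j \in tree_pa i -> o j = o' j) -> table_cpt i (T i) o = table_cpt i (T i) o'.
Proof. by rewrite /tree_pa /table_cpt; case: ifP => //= _ eq_pa; rewrite eq_pa ?set11. Qed.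

Lemma tree_pa_nondummy i j : j \in tree_pa i ->
  exists o o' : outcome n,
    (forall k, k != j -> o k = o' k) /\ table_cpt i (T i) o <> table_cpt i (T i) o'.
Proof.
rewrite /tree_pa /table_cpt; case: ifP => [/andP[/eqP pref01 _] | _]; last by rewrite inE.
rewrite inE => /eqP ->.
exists (const_outcome n false), [ffun k => k == parent (T i)]; split.
  by move=> k /negbTE kj; rewrite !ffunE kj.
by rewrite !ffunE eqxx.
Qed.

Definition tree_net : cpnet n := CPNet tree_pa_irrefl tree_cpt_local tree_pa_nondummy.

End TreeNet.

Lemma cpt_no_parent n (N : cpnet n) i o :
  pa N i = set0 -> cpt N i o = cpt N i (const_outcome n false).
Proof. by move=> pa0; apply: cpt_local => j; rewrite pa0 inE. Qed.

Lemma cpt_single_parent n (N : cpnet n) i j o : pa N i = [set j] ->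
  cpt N i o = if o j then cpt N i (const_outcome n true) else cpt N i (const_outcome n false).
Proof.
by move=> paj; case: ifP => oj; apply: cpt_local => k; rewrite paj inE => /eqP->; rewrite ffunE.
Qed.

Lemma cpt_single_parent_neq n (N : cpnet n) i j : pa N i = [set j] ->
  cpt N i (const_outcome n false) != cpt N i (const_outcome n true).
Proof.
move=> paj; apply/eqP => cpt01.
have /pa_nondummy[o [o' [_ cpt_oo']]] : j \in pa N i by rewrite paj set11.
by apply: cpt_oo'; rewrite (cpt_single_parent o paj) (cpt_single_parent o' paj) cpt01 !if_same.
Qed.

Definition learn_table n (i : 'I_n) : qprog n (table n) :=
  c0 <- query_cpt (const_outcome n false) i ;;
  c1 <- query_cpt (const_outcome n true) i ;;
  if c0 == c1 then Ret (Table c0 c1 i) else (j <- find_parent i c0 c1 ;; Ret (Table c0 c1 j)).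

Lemma learn_table_correct n (N : cpnet n) ans i : tree_cpnet N -> mq_oracle N ans ->
  table_cpt i (qval (learn_table i) ans) =1 cpt N i /\
  qcost (learn_table i) ans = 4 + #|pa N i| * nbits n.
Proof.
move=> [acyc deg1] oracle.
rewrite /learn_table qval_bind qcost_bind (qval_query_cpt _ _ acyc oracle) qcost_query_cpt.
rewrite qval_bind qcost_bind (qval_query_cpt _ _ acyc oracle) qcost_query_cpt.
set c0 := cpt N i _; set c1 := cpt N i _.
move: (deg1 i); rewrite leq_eqVlt ltnS leqn0 => /orP[/cards1P[j paj] | /eqP/cards0_eq pa0].
  have c01 := cpt_single_parent_neq paj.
  have ji : j != i by apply: contraNneq (pa_irrefl N i) => ji; rewrite -[X in X \in _]ji paj set11.
  have [find_j cost_j] := find_parent_correct acyc oracle c01 (fun o => cpt_single_parent o paj).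
  rewrite (negbTE c01) qval_bind qcost_bind find_j cost_j paj cards1 addn0 mul1n.
  by split=> // o; rewrite /table_cpt /has_parent /= c01 ji (cpt_single_parent o paj).
have c10 : c1 = c0 by rewrite /c1 cpt_no_parent.
rewrite c10 eqxx pa0 cards0; split=> // o.
by rewrite /table_cpt /has_parent /= eqxx (cpt_no_parent _ pa0).
Qed.

Definition tree_program n : qprog n (cpnet n) :=
  tables <- qmap (@learn_table n) (enum 'I_n) ;;
  Ret (tree_net (fun i => nth (Table None None i) tables i)).

Lemma tree_program_correct n (N : cpnet n) ans : tree_cpnet N -> mq_oracle N ans ->
  (forall i, cpt (qval (tree_program n) ans) i =1 cpt N i) /\
  qcost (tree_program n) ans = 4 * n + nedges N * nbits n.
Proof.
move=> tree oracle; rewrite qval_bind qcost_bind qval_map qcost_map addn0; split.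
  move=> i o /=; rewrite (nth_map i) ?size_enum_ord // nth_ord_enum.
  exact: (learn_table_correct i tree oracle).1.
rewrite big_enum /= (eq_bigr _ (fun i _ => (learn_table_correct i tree oracle).2)).
by rewrite big_split /= sum_nat_const card_ord mulnC /nedges big_distrl.
Qed.

Lemma nedges_eq0 n (N : cpnet n) : n <= 1 -> nedges N = 0.
Proof.
move=> n_le1; apply: big1 => i _; apply/eqP; rewrite cards_eq0; apply/eqP/setP => j.
have ord_eq0 (k : 'I_n) : val k = 0.
  by apply/eqP; rewrite -leqn0 -ltnS (leq_trans (ltn_ord k) n_le1).
have -> : j = i by apply: val_inj; rewrite /= !ord_eq0.
by rewrite inE (negbTE (pa_irrefl N i)).
Qed.

Lemma INR_expn2 t : INR (expn 2 t) = (2 ^ t)%R.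
Proof. by elim: t => [|t IH]; rewrite ?expn0 // expnS mult_INR IH. Qed.

Lemma ln_le (x y : R) : (0 < x -> x <= y -> ln x <= ln y)%R.
Proof. by move=> x_gt0 [/(ln_increasing _ _ x_gt0)/Rlt_le | ->]; [| apply: Rle_refl]. Qed.

Lemma log2_ge_exp t m : 0 < m -> expn 2 t <= m -> (INR t <= log2 (INR m))%R.
Proof.
move=> m_gt0 le_tm.
have ln2_gt0 : (0 < ln 2)%R by rewrite -ln_1; apply: ln_increasing; lra.
apply: (Rmult_le_reg_r (ln 2)) => //.
rewrite /log2 /Rdiv Rmult_assoc Rinv_l ?Rmult_1_r; last lra.
rewrite -ln_pow; last lra.
apply: ln_le; first by apply: pow_lt; lra.
by rewrite -INR_expn2; apply/le_INR/leP.
Qed.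

Lemma nbits_le_2log2 n : 1 < n -> (INR (nbits n) <= 2 * log2 (INR n))%R.
Proof.
move=> n_gt1; have t_ge1 : (1 <= INR (trunc_log 2 n))%R.
  by apply: (le_INR 1); apply/leP; rewrite trunc_log_gt0.
have := log2_ge_exp (ltnW n_gt1) (trunc_logP (isT : 1 < 2) (ltnW n_gt1)).
by rewrite /nbits S_INR; lra.
Qed.

Lemma cost_le_log2_bound n e : (n <= 1 -> e = 0) ->
  (INR (4 * n + e * nbits n) <= INR (4 * n) + 2 * INR e * log2 (INR n))%R.
Proof.
move=> e_eq0; rewrite plus_INR; apply: Rplus_le_compat_l.
have [/e_eq0-> | n_gt1] := leqP n 1; first by rewrite !Rmult_0_r Rmult_0_l; apply: Rle_refl.
rewrite mult_INR (Rmult_comm 2) Rmult_assoc.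
by apply: Rmult_le_compat_l; [exact: pos_INR | exact: nbits_le_2log2].
Qed.

Theorem theorem7 (n : nat) (hn : 1 <= n) :
  exists L : learner n,
    forall (Nstar : cpnet n) (ans : swap_ex n -> bool),
      tree_cpnet Nstar -> mq_oracle Nstar ans ->
      same_concept (run L ans).1 Nstar /\
      (INR (run L ans).2 <=
         INR (4 * n) + 2 * INR (nedges Nstar) * log2 (INR n))%R.
Proof.
exists (learner_of (tree_program n)) => N ans tree oracle.
rewrite run_learner_of /=.
have [cpt_eq cost] := tree_program_correct tree oracle.
split.
  move=> x; split; apply: prefers_eq_cpt => // i o; exact/esym/cpt_eq.
by rewrite cost; apply: cost_le_log2_bound; exact: nedges_eq0.
Qed.
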